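(* The Hilbert series of the coordinate ring of the cone of ${\mathrm{O}}(3)$ is \[\mathrm{H}(\mathcal{O}(\mathcal{C}({\mathrm{O}}(3)));t)=-t+\sum_{d=0}^\infty\binom{2d+3}{3}t^{d}=\frac{1+5t+5t^2-6t^3+4t^4-t^5}{(1-t)^4}.\]
   Context: ${\mathrm{O}}(3)=\{M\in\mathbb{C}^{3\times3}\mid M^TM=I\}$. The cone $\mathcal{C}({\mathrm{O}}(3))$ is the Zariski closure in $\mathbb{C}^{3\times 3}$ of $\{cM\mid c\in\mathbb{C},M\in{\mathrm{O}}(3)\}$; its coordinate ring is the quotient of the standard graded polynomial ring $\mathbb{C}[x_{ij}\mid 1\le i,j\le 3]$ by the homogeneous vanishing ideal of the cone, with the induced grading. The Hilbert series of a graded algebra $A=\bigoplus_dA_d$ is $\sum_d\dim_{\mathbb{C}}(A_d)t^d$. *)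

From HB Require Import structures.
From mathcomp Require Import all_boot all_order all_algebra.
From mathcomp Require Import reals.
From mathcomp Require Import complex.
From mathcomp Require Import mpoly.
Set Implicit Arguments. Unset Strict Implicit. Unset Printing Implicit Defensive.
Import Order.TTheory GRing.Theory Num.Theory.
Local Open Scope ring_scope.

Definition CC (R : realType) := complex R.

(* Polynomial ring C[x_ij | 1 <= i,j <= 3]; variable x_ij is the variable
   of index mxvec_index i j in 'I_(3*3). *)
Definition poly9 (R : realType) := {mpoly CC R[3 * 3]}.

Definition evalM (R : realType) (p : poly9 R) (M : 'M[CC R]_3) : CC R :=
  p.@[fun k => mxvec M 0 k].

Definition inO3 (R : realType) (M : 'M[CC R]_3) : Prop := M^T *m M = 1%:M.

Definition vanishes_on (R : realType) (S : 'M[CC R]_3 -> Prop) (p : poly9 R) : Prop :=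
  forall M, S M -> evalM p M = 0.

Definition zariski_closure (R : realType) (S : 'M[CC R]_3 -> Prop) : 'M[CC R]_3 -> Prop :=
  fun N => forall p, vanishes_on S p -> evalM p N = 0.

Definition coneO3 (R : realType) : 'M[CC R]_3 -> Prop :=
  zariski_closure (fun N => exists (c : CC R) (M : 'M[CC R]_3), inO3 M /\ N = c *: M).

(* A family ps_0..ps_{n-1} of degree-d forms that is linearly independent
   modulo the vanishing ideal of the cone, i.e. whose images in the degree-d
   part A_d of the coordinate ring are linearly independent. *)
Definition indep_mod_cone (R : realType) (d n : nat) (ps : 'I_n -> poly9 R) : Prop :=
  (forall i, ps i \is d.-homog) /\
  (forall a : 'I_n -> CC R,
      vanishes_on (@coneO3 R) (\sum_(i < n) a i *: ps i) -> forall i, a i = 0).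

(* dim_C A_d = n, where A_d is the degree-d part of the coordinate ring
   C[x_ij]/I(C(O(3))) : n is the maximal size of a linearly independent family
   in A_d (every element of A_d is the class of a degree-d form). *)
Definition dim_coord_ring_deg (R : realType) (d n : nat) : Prop :=
  (exists ps : 'I_n -> poly9 R, indep_mod_cone d ps) /\
  (forall ps : 'I_n.+1 -> poly9 R, ~ indep_mod_cone d ps).

From HB Require Import structures.
From mathcomp Require Import all_boot all_order all_algebra.
From mathcomp Require Import reals complex mpoly.
From mathcomp Require Import ring zify.
Import Order.TTheory GRing.Theory Num.Theory.
Set Implicit Arguments. Unset Strict Implicit. Unset Printing Implicit Defensive.
Local Open Scope ring_scope.

(* A rotation N of C^3 with 1 + tr N != 0 is, up to a scalar, the Euler-Rodrigues matrix
   Phi(q) of the quaternion q = (1 + tr N, N21 - N12, N02 - N20, N10 - N01), and left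
   multiplication by the sign rotations diag(1,-1,-1), ... reduces every rotation to
   this case.  Hence every orthogonal matrix is c Phi(q), and since Phi(q)^T Phi(q) =
   |q|^4 I, a d-form p vanishes on the cone iff p o Phi = 0.  So the degree-d part of
   the coordinate ring is the image of p |-> p o Phi in the 2d-forms in four variables.
   For d <> 1 this image is everything: the quadrics Phi_ij give all products X_a X_b
   (a <> b) and all differences X_a^2 - X_b^2, which generate every monomial of
   degree 2d >= 4; this gives C(2d + 3, 3).  For d = 1 the image is spanned by the nine
   linearly independent entries of Phi. *)

(* Entries at natural-number indices: after [inordK] entrywise goals become
   [ring] problems in numerals. *)
Definition ent (T : Type) n (A : 'M[T]_n.+1) (i j : nat) := A (inord i) (inord j).

Lemma entE (T : Type) n (A : 'M[T]_n.+1) i j : A i j = ent A i j.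
Proof. by rewrite /ent !inord_val. Qed.

Lemma sum3 (V : nmodType) (F : 'I_3 -> V) :
  \sum_(k < 3) F k = F (inord 0) + F (inord 1) + F (inord 2).
Proof.
rewrite !big_ord_recl big_ord0 addr0 addrA; congr (F _ + F _ + F _);
  by apply/val_inj; rewrite /= ?inordK.
Qed.

Lemma mx3P (T : Type) (A B : 'M[T]_3) :
  (forall i j, (i < 3)%N -> (j < 3)%N -> ent A i j = ent B i j) -> A = B.
Proof. by move=> eqAB; apply/matrixP=> i j; rewrite !entE; apply: eqAB. Qed.

Section Quaternion.
Variable T : comRingType.

(* The rotation matrix of the quaternion w + x i + y j + z k, scaled by its squared norm. *)
Definition phiE (w x y z : T) (i j : nat) : T :=
  match i, j with
  | 0, 0 => w*w + x*x - y*y - z*z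
  | 0, 1 => (x*y - w*z) *+ 2
  | 0, 2 => (x*z + w*y) *+ 2
  | 1, 0 => (x*y + w*z) *+ 2
  | 1, 1 => w*w - x*x + y*y - z*z
  | 1, 2 => (y*z - w*x) *+ 2
  | 2, 0 => (x*z - w*y) *+ 2
  | 2, 1 => (y*z + w*x) *+ 2
  | _, _ => w*w - x*x - y*y + z*z
  end.

Definition Phimx (w x y z : T) : 'M[T]_3 := \matrix_(i < 3, j < 3) phiE w x y z i j.

Lemma ent_Phimx w x y z i j : (i < 3)%N -> (j < 3)%N ->
  ent (Phimx w x y z) i j = phiE w x y z i j.
Proof. by move=> ltn_i ltn_j; rewrite /ent mxE !inordK. Qed.

Lemma ent_mulmx (A B : 'M[T]_3) i j :
  ent (A *m B) i j = ent A i 0 * ent B 0 j + ent A i 1 * ent B 1 j + ent A i 2 * ent B 2 j.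
Proof. by rewrite /ent mxE sum3. Qed.

Lemma ent_tr (A : 'M[T]_3) i j : ent A^T i j = ent A j i.
Proof. by rewrite /ent mxE. Qed.

Lemma ent_scalar a i j : (i < 3)%N -> (j < 3)%N ->
  ent (a%:M : 'M[T]_3) i j = a *+ (i == j).
Proof. by move=> ltn_i ltn_j; rewrite /ent mxE -val_eqE /= !inordK. Qed.

Lemma ent_scale a (A : 'M[T]_3) i j : ent (a *: A) i j = a * ent A i j.
Proof. by rewrite /ent mxE. Qed.

Lemma ent_add (A B : 'M[T]_3) i j : ent (A + B) i j = ent A i j + ent B i j.
Proof. by rewrite /ent mxE. Qed.

Lemma ent_opp (A : 'M[T]_3) i j : ent (- A) i j = - ent A i j.
Proof. by rewrite /ent mxE. Qed.

Lemma mxtrace3 (A : 'M[T]_3) : \tr A = ent A 0 0 + ent A 1 1 + ent A 2 2.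
Proof. by rewrite /mxtrace sum3. Qed.

Lemma ent_adj (A : 'M[T]_3) i j : (i < 3)%N -> (j < 3)%N ->
  ent (\adj A) i j =
  ent A (j.+1 %% 3) (i.+1 %% 3) * ent A (j.+2 %% 3) (i.+2 %% 3)
  - ent A (j.+1 %% 3) (i.+2 %% 3) * ent A (j.+2 %% 3) (i.+1 %% 3).
Proof.
have det2 (B : 'M[T]_2) : \det B = ent B 0 0 * ent B 1 1 - ent B 0 1 * ent B 1 0.
  rewrite (expand_det_row _ 0) !big_ord_recl big_ord0 /cofactor !det_mx11 !mxE.
  by rewrite !entE /= expr0 expr1; ring.
move=> ltn_i ltn_j; rewrite /ent mxE /cofactor det2 /ent !mxE !entE /=.
case: i ltn_i => [|[|[|//]]] _; case: j ltn_j => [|[|[|//]]] _; rewrite !inordK //= /bump /=; ring.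
Qed.

Lemma Phimx_mul w x y z w' x' y' z' :
  Phimx w x y z *m Phimx w' x' y' z' =
  Phimx (w * w' - x * x' - y * y' - z * z') (w * x' + x * w' + y * z' - z * y')
        (w * y' - x * z' + y * w' + z * x') (w * z' + x * y' - y * x' + z * w').
Proof.
apply/mx3P => -[|[|[|i]]] // -[|[|[|j]]] // _ _;
  rewrite ent_mulmx !ent_Phimx //=; ring.
Qed.

Lemma tr_Phimx w x y z : (Phimx w x y z)^T = Phimx w (- x) (- y) (- z).
Proof.
apply/mx3P => -[|[|[|i]]] // -[|[|[|j]]] // _ _;
  rewrite ent_tr !ent_Phimx //=; ring.
Qed.

Lemma Phimx_orth w x y z :
  (Phimx w x y z)^T *m Phimx w x y z = ((w*w + x*x + y*y + z*z) ^+ 2)%:M.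
Proof.
apply/mx3P => -[|[|[|i]]] // -[|[|[|j]]] // _ _;
  rewrite ent_mulmx !ent_tr !ent_Phimx // ent_scalar //=; ring.
Qed.


Lemma Phimx_rotation (N : 'M[T]_3) : N^T *m N = 1%:M -> \adj N = N^T ->
  Phimx (1 + \tr N) (ent N 2 1 - ent N 1 2) (ent N 0 2 - ent N 2 0) (ent N 1 0 - ent N 0 1)
  = (4%:R * (1 + \tr N)) *: N.
Proof.
move=> orthN adjN.
(* Each entry of the difference of the two sides is a linear combination of entries of
   the three matrices below, which vanish on rotations. *)
pose G := N^T *m N - 1%:M; pose G' := N *m N^T - 1%:M; pose K := \adj N - N^T.
have -> : Phimx (1 + \tr N) (ent N 2 1 - ent N 1 2) (ent N 0 2 - ent N 2 0) (ent N 1 0 - ent N 0 1)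
  = (4%:R * (1 + \tr N)) *: N - 2%:R *: (G + G') + 2%:R *: (K + K^T) + (\tr G - 2%:R * \tr K)%:M.
  apply/mx3P => -[|[|[|i]]] // -[|[|[|j]]] // _ _;
  rewrite !(ent_add, ent_opp, ent_scale, ent_tr) ent_Phimx // ent_scalar // !mxtrace3
    !(ent_add, ent_opp, ent_scalar, ent_mulmx, ent_tr, ent_adj) //= /modn /=; ring.
rewrite /G /G' /K orthN (mulmx1C orthN) adjN !subrr trmx0 mxtrace0.
by rewrite !(addr0, mulr0, scaler0, subr0, subrr) raddf0 addr0.
Qed.

Lemma det3 (A : 'M[T]_3) : \det A =
  ent A 0 0 * ent (\adj A) 0 0 + ent A 0 1 * ent (\adj A) 1 0 + ent A 0 2 * ent (\adj A) 2 0.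
Proof. by rewrite -ent_mulmx mul_mx_adj ent_scalar. Qed.

Lemma det_Phimx w x y z : \det (Phimx w x y z) = (w*w + x*x + y*y + z*z) ^+ 3.
Proof. by rewrite det3 !ent_adj // !ent_Phimx //= /modn /=; ring. Qed.

Lemma adj_rotation (N : 'M[T]_3) : N^T *m N = 1%:M -> \det N = 1 -> \adj N = N^T.
Proof.
move=> orthN detN; have := mul_mx_adj N; rewrite detN => NadjN.
by rewrite -[\adj N]mul1mx -orthN -mulmxA NadjN mulmx1.
Qed.

End Quaternion.

Section Rotations.
Variable F : fieldType.
Hypothesis two_neq0 : 2%:R != 0 :> F.

Lemma rotation_Phimx (N : 'M[F]_3) : N^T *m N = 1%:M -> \det N = 1 ->
  exists (c w x y z : F), N = c *: Phimx w x y z.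
Proof.
move=> orthN detN.
have by_sign_rotation w x y z : w*w + x*x + y*y + z*z = 1 -> 1 + \tr (Phimx w x y z *m N) != 0 ->
    exists (c w x y z : F), N = c *: Phimx w x y z.
  move=> unit_q ntr; set N' := Phimx w x y z *m N.
  have orthN' : N'^T *m N' = 1%:M.
    by rewrite trmx_mul mulmxA -(mulmxA N^T) Phimx_orth unit_q expr1n mulmx1 orthN.
  have := Phimx_rotation orthN' (adj_rotation orthN' _); rewrite det_mulmx det_Phimx unit_q.
  rewrite expr1n mul1r => /(_ detN) /(congr1 (mulmx (Phimx w (- x) (- y) (- z)))).
  rewrite Phimx_mul -scalemxAr -tr_Phimx mulmxA Phimx_orth unit_q expr1n mul1mx => rotN.
  have nz : 4%:R * (1 + \tr N') != 0 by rewrite mulf_neq0 // (natrM F 2 2) mulf_neq0.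
  exists (4%:R * (1 + \tr N'))^-1; do 4 eexists.
  by rewrite -[N in LHS](scalerK nz) -rotN.
(* The four sign rotations Phimx e_k sum to 0, so the numbers 1 + tr (Phimx e_k *m N)
   sum to 4 and one of them is invertible. *)
have sum_tr : (1 + \tr (Phimx 1 0 0 0 *m N)) + (1 + \tr (Phimx 0 1 0 0 *m N))
  + (1 + \tr (Phimx 0 0 1 0 *m N)) + (1 + \tr (Phimx 0 0 0 1 *m N)) = 4%:R.
  by rewrite !mxtrace3 !ent_mulmx !ent_Phimx //=; ring.
have [t0|] := eqVneq (1 + \tr (Phimx 1 0 0 0 *m N)) 0; last by apply: by_sign_rotation; ring.
have [t1|] := eqVneq (1 + \tr (Phimx 0 1 0 0 *m N)) 0; last by apply: by_sign_rotation; ring.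
have [t2|] := eqVneq (1 + \tr (Phimx 0 0 1 0 *m N)) 0; last by apply: by_sign_rotation; ring.
have [t3|] := eqVneq (1 + \tr (Phimx 0 0 0 1 *m N)) 0; last by apply: by_sign_rotation; ring.
by move: sum_tr; rewrite t0 t1 t2 t3 !addr0 (natrM F 2 2) => /esym/eqP; rewrite mulf_eq0 orbb
  (negPf two_neq0).
Qed.

Lemma orthogonal_Phimx (M : 'M[F]_3) : M^T *m M = 1%:M ->
  exists (c w x y z : F), M = c *: Phimx w x y z.
Proof.
move=> orthM; pose d := \det M.
have dd : d * d = 1 by have := congr1 determinant orthM; rewrite det_mulmx det_tr det1.
have orthN : (d *: M)^T *m (d *: M) = 1%:M.
  have -> : (d *: M)^T = d *: M^T by apply/matrixP => i j; rewrite !mxE.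
  by rewrite -scalemxAl -scalemxAr orthM scalerA dd scale1r.
have detN : \det (d *: M) = 1.
  by rewrite detZ -/d !exprS expr0 mulr1 !mulrA dd mul1r dd.
have [c [w [x [y [z defN]]]]] := rotation_Phimx orthN detN.
by exists (d * c), w, x, y, z; rewrite -scalerA -defN scalerA dd scale1r.
Qed.

End Rotations.

Lemma rmorph_phiE (T T' : comRingType) (f : {rmorphism T -> T'}) w x y z i j :
  f (phiE w x y z i j) = phiE (f w) (f x) (f y) (f z) i j.
Proof.
by case: i => [|[|[|i]]]; case: j => [|[|[|j]]];
  rewrite /= ?(rmorphB, rmorphD, rmorphMn, rmorphM).
Qed.

Section PullBack.
Variable F : comRingType.
Local Notation P4 := {mpoly F[4]}.
Local Notation P9 := {mpoly F[3 * 3]}.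

Definition qX (k : nat) : P4 := 'X_(inord k).
Definition PhiX : 'M[P4]_3 := Phimx (qX 0) (qX 1) (qX 2) (qX 3).
Definition PhiX_entries : (3 * 3).-tuple P4 := [tuple mxvec PhiX 0 k | k < 3 * 3].
Definition pullPhi (p : P9) : P4 := p \mPo PhiX_entries.
Definition Phimx_at (v : 'I_4 -> F) : 'M[F]_3 :=
  Phimx (v (inord 0)) (v (inord 1)) (v (inord 2)) (v (inord 3)).
Definition mxeval (p : P9) (N : 'M[F]_3) : F := p.@[fun k => mxvec N 0 k].

Lemma tnth_PhiX_entries k : tnth PhiX_entries k = mxvec PhiX 0 k.
Proof. by rewrite tnth_mktuple. Qed.

Lemma meval_pullPhi p v : (pullPhi p).@[v] = mxeval p (Phimx_at v).
Proof.
rewrite /pullPhi comp_mpoly_meval /mxeval; apply: meval_eq => k.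
rewrite tnth_PhiX_entries; case/mxvec_indexP: k => i j; rewrite !mxvecE !mxE.
by rewrite (rmorph_phiE (meval v)) /qX /= !mevalXU.
Qed.

Lemma pullPhiX i j : pullPhi 'X_(mxvec_index i j) = PhiX i j.
Proof. by rewrite /pullPhi comp_mpolyXU -tnth_nth tnth_PhiX_entries mxvecE. Qed.

Lemma qX_homog k : qX k \is 1.-homog.
Proof. by rewrite /qX dhomogX; apply/eqP; exact: mdeg1. Qed.

Lemma PhiX_homog i j : PhiX i j \is 2.-homog.
Proof.
have hM a b : (qX a * qX b) \is 2.-homog by apply: (dhomogM (qX_homog a) (qX_homog b)).
rewrite mxE; case: (nat_of_ord i) => [|[|[|?]]]; case: (nat_of_ord j) => [|[|[|?]]];
  by rewrite /= ?(rpredB, rpredD, rpredMn, hM).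
Qed.

Lemma dhomog_big_prod (I : Type) (r : seq I) (e : I -> nat) (Q : I -> P4) :
  (forall i, Q i \is (e i).-homog) -> \prod_(i <- r) Q i \is (\sum_(i <- r) e i)%N.-homog.
Proof.
move=> h; elim: r => [|a r IH]; first by rewrite !big_nil dhomog1.
by rewrite !big_cons; apply: dhomogM (h a) IH.
Qed.

Lemma pullPhi_homog d p : p \is d.-homog -> pullPhi p \is (2 * d).-homog.
Proof.
move=> hp; rewrite /pullPhi comp_mpolyE big_seq; apply: rpred_sum => m hm; apply: rpredZ.
have -> : (2 * d = \sum_(i < 3 * 3) 2 * m i)%N.
  by rewrite -big_distrr /= -mdegE (dhomog_mf hp hm).
apply: dhomog_big_prod => i; apply: dhomogMn.
rewrite tnth_PhiX_entries; case/mxvec_indexP: i => i j; rewrite mxvecE; exact: PhiX_homog.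
Qed.

Lemma mxevalZ_homog d p c N : p \is d.-homog -> mxeval p (c *: N) = c ^+ d * mxeval p N.
Proof.
move=> hp; rewrite /mxeval !mevalE big_distrr /=; apply: eq_big_seq => m hm.
rewrite mulrCA; congr (_ * _).
have hd : d = (\sum_i m i)%N by rewrite -mdegE (dhomog_mf hp hm).
rewrite hd -prodrXr -big_split /=; apply: eq_bigr => i _.
by rewrite linearZ mxE exprMn.
Qed.

End PullBack.

Section Vanish.
Variable F : numDomainType.

Lemma poly_vanish (U : {poly F}) : (forall x, U.[x] = 0) -> U = 0.
Proof.
move=> h; apply: (@roots_geq_poly_eq0 _ U [seq i%:R | i <- iota 0 (size U)]).
- by apply/allP => x /mapP [i _ ->]; rewrite /root h.
- by rewrite map_inj_uniq ?iota_uniq // => a b /eqP; rewrite eqr_nat => /eqP.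
- by rewrite size_map size_iota.
Qed.

Definition mdrop_last n (m : 'X_{1..n.+1}) : 'X_{1..n} :=
  [multinom m (widen_ord (leqnSn n) i) | i < n].

Lemma mdrop_last_inj n (m1 m2 : 'X_{1..n.+1}) :
  m1 ord_max = m2 ord_max -> mdrop_last m1 = mdrop_last m2 -> m1 = m2.
Proof.
move=> h1 /mnmP h2; apply/mnmP => i; case: (ltnP i n) => hi.
  have -> : i = widen_ord (leqnSn n) (Ordinal hi) by apply/val_inj.
  by have := h2 (Ordinal hi); rewrite !mnmE.
have -> : i = ord_max by apply/val_inj/anti_leq; rewrite hi -ltnS ltn_ord.
exact: h1.
Qed.

Definition ext_last n (v : 'I_n -> F) (x : F) (i : 'I_n.+1) : F := oapp v x (insub (val i)).

Lemma ext_last_widen n v x (j : 'I_n) : ext_last v x (widen_ord (leqnSn n) j) = v j.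
Proof. by rewrite /ext_last /= valK. Qed.

Lemma ext_last_max n v x : ext_last v x (@ord_max n) = x.
Proof. by rewrite /ext_last /= insubN // ltnn. Qed.

Lemma big_seq_fibers (T : eqType) (V : nmodType) (s : seq T) (f : T -> nat) N (G : T -> V) :
  (forall m, m \in s -> (f m < N)%N) ->
  \sum_(m <- s) G m = \sum_(k < N) \sum_(m <- s | f m == k) G m.
Proof.
move=> h; symmetry.
rewrite (eq_bigr (fun k : 'I_N => \sum_(m <- s) (if f m == k then G m else 0)));
  last by move=> k _; rewrite big_mkcond.
rewrite exchange_big /= big_seq [in RHS]big_seq; apply: eq_bigr => m hm.
by rewrite -big_mkcond /= (big_pred1 (Ordinal (h m hm))).
Qed.

Lemma mpoly_vanish n (P : {mpoly F[n]}) : (forall v, P.@[v] = 0) -> P = 0.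
Proof.
elim: n P => [|n IH] P hP.
  by have := hP (fun=> 0); rewrite (nvar0_mpolyC P) mevalC => ->; rewrite mpolyC0.
pose N := (\max_(m <- msupp P) m ord_max).+1.
have hN m : m \in msupp P -> (m ord_max < N)%N.
  by move=> hm; rewrite ltnS (leq_bigmax_seq m).
pose Q (k : nat) : {mpoly F[n]} :=
  \sum_(m <- msupp P | m ord_max == k) P@_m *: 'X_[mdrop_last m].
have hPQ v : P.@[v] = \sum_(k < N) (Q k).@[fun i => v (widen_ord (leqnSn n) i)] * v ord_max ^+ k.
  rewrite mevalE (@big_seq_fibers _ _ _ (fun m : 'X_{1..n.+1} => m ord_max) N _ hN).
  apply: eq_bigr => k _; rewrite /Q raddf_sum /= big_distrl /=.
  apply: eq_bigr => m /eqP hmk; rewrite mevalZ mevalX big_ord_recr /= hmk mulrA.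
  by congr (_ * _ * _); apply: eq_bigr => i _; rewrite mnmE.
have hQ k : (k < N)%N -> Q k = 0.
  move=> hk; apply: IH => v'.
  pose U := \poly_(j < N) (Q j).@[v'].
  have hU : U = 0.
    apply: poly_vanish => x; rewrite horner_poly.
    transitivity (P.@[ext_last v' x]); last exact: hP.
    rewrite hPQ; apply: eq_bigr => j _; rewrite ext_last_max; congr (_ * _).
    by apply: meval_eq => i; rewrite ext_last_widen.
  by have := congr1 (fun p : {poly F} => p`_k) hU; rewrite coef_poly hk coef0.
apply/mpolyP => m0; rewrite mcoeff0; apply/eqP; apply/negPn/negP => hm0.
rewrite -mcoeff_msupp in hm0.
have := congr1 (mcoeff (mdrop_last m0)) (hQ _ (hN _ hm0)); rewrite /Q raddf_sum /= mcoeff0.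
rewrite big_mkcond (bigD1_seq m0) ?msupp_uniq //= eqxx mcoeffZ mcoeffX eqxx mulr1 big1 ?addr0.
  by move=> h; move: hm0; rewrite mcoeff_msupp h eqxx.
move=> m hne; case: eqP => [hl|]; last by [].
rewrite mcoeffZ mcoeffX.
case: eqP => [hmr|]; last by rewrite mulr0.
by move: hne; rewrite (mdrop_last_inj hl hmr) eqxx.
Qed.
End Vanish.

Section Key.
Variable F : numFieldType.
Local Notation P4 := {mpoly F[4]}.
Local Notation P9 := {mpoly F[3 * 3]}.

Definition qnorm : P4 := qX F 0 * qX F 0 + qX F 1 * qX F 1 + qX F 2 * qX F 2 + qX F 3 * qX F 3.

Lemma meval_qnorm v : qnorm.@[v] =
  v (inord 0) * v (inord 0) + v (inord 1) * v (inord 1)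
  + v (inord 2) * v (inord 2) + v (inord 3) * v (inord 3).
Proof. by rewrite /qnorm /qX !(mevalD, mevalM, mevalXU). Qed.

Lemma qnorm_neq0 : qnorm != 0.
Proof.
apply/negP => /eqP h; have := congr1 (meval (fun _ => 1)) h.
have e4 : (1 + 1 + 1 + 1 : F) = 4%:R by ring.
by rewrite meval_qnorm meval0 !mulr1 e4 => /eqP; rewrite pnatr_eq0.
Qed.

Lemma pullPhi_eq0_of_vanish (p : P9) :
  (forall c (M : 'M[F]_3), M^T *m M = 1%:M -> mxeval p (c *: M) = 0) -> pullPhi p = 0.
Proof.
move=> h.
(* Off the zero set of qnorm, Phimx_at v is a multiple of an orthogonal matrix. *)
suff : qnorm * pullPhi p = 0 by move/eqP; rewrite mulf_eq0 (negbTE qnorm_neq0) /= => /eqP.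
apply: mpoly_vanish => v; rewrite mevalM meval_pullPhi.
have [s0|s0] := eqVneq (qnorm.@[v]) 0; first by rewrite s0 mul0r.
rewrite (_ : Phimx_at v = qnorm.@[v] *: ((qnorm.@[v])^-1 *: Phimx_at v)); last first.
  by rewrite scalerA mulfV // scale1r.
rewrite h ?mulr0 //.
have eT : ((qnorm.@[v])^-1 *: Phimx_at v)^T = (qnorm.@[v])^-1 *: (Phimx_at v)^T.
  by apply/matrixP => i j; rewrite !mxE.
rewrite eT -scalemxAl -scalemxAr /Phimx_at Phimx_orth -meval_qnorm !scale_scalar_mx.
by congr (_%:M); field.
Qed.

Lemma vanish_of_pullPhi_eq0 d (p : P9) : p \is d.-homog -> pullPhi p = 0 ->
  forall c (M : 'M[F]_3), M^T *m M = 1%:M -> mxeval p (c *: M) = 0.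
Proof.
move=> hp hT c M hM.
have two_neq0 : 2%:R != 0 :> F by rewrite pnatr_eq0.
have [c' [w [x [y [z ->]]]]] := orthogonal_Phimx two_neq0 hM.
pose v (i : 'I_4) := nth 0 [:: w; x; y; z] i.
have -> : Phimx w x y z = Phimx_at v by rewrite /Phimx_at /v !inordK.
by rewrite scalerA (mxevalZ_homog _ _ hp) -meval_pullPhi hT meval0 mulr0.
Qed.

End Key.

Section Image.
Variable F : numFieldType.
Local Notation P4 := {mpoly F[4]}.
Local Notation P9 := {mpoly F[3 * 3]}.
Local Notation X := (qX F).

Definition pulled d (P : P4) := exists p : P9, p \is d.-homog /\ pullPhi p = P.

Lemma pulled0 d : pulled d 0.
Proof. by exists 0; rewrite dhomog0 /pullPhi raddf0. Qed.

Lemma pulledD d A B : pulled d A -> pulled d B -> pulled d (A + B).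
Proof.
move=> [a [ha <-]] [b [hb <-]]; exists (a + b); split; first exact: rpredD.
by rewrite /pullPhi raddfD.
Qed.

Lemma pulledZ d c A : pulled d A -> pulled d (c *: A).
Proof.
move=> [a [ha <-]]; exists (c *: a); split; first exact: rpredZ.
by rewrite /pullPhi linearZ.
Qed.

Lemma pulledB d A B : pulled d A -> pulled d B -> pulled d (A - B).
Proof. by move=> hA hB; rewrite -scaleN1r; apply: pulledD hA (pulledZ _ hB). Qed.

Lemma pulled_of_natmul k d A : (0 < k)%N -> pulled d (A *+ k) -> pulled d A.
Proof.
move=> hk /(pulledZ (k%:R^-1)); rewrite -scaler_nat scalerA mulVf ?scale1r //.
by rewrite pnatr_eq0 -lt0n.
Qed.

Lemma pulledM a b A B : pulled a A -> pulled b B -> pulled (a + b) (A * B).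
Proof.
move=> [p [hp <-]] [q [hq <-]]; exists (p * q); split; first exact: dhomogM.
by rewrite /pullPhi rmorphM.
Qed.

Lemma pulled_phiE i j : (i < 3)%N -> (j < 3)%N -> pulled 1 (phiE (X 0) (X 1) (X 2) (X 3) i j).
Proof.
move=> hi hj; exists 'X_(mxvec_index (inord i) (inord j)); split.
  by rewrite dhomogX; apply/eqP; exact: mdeg1.
by rewrite pullPhiX /PhiX mxE !inordK.
Qed.

Local Notation Phi := (phiE (X 0) (X 1) (X 2) (X 3)).

Lemma pulled_of_phiE_sub (Q : P4) k i j i' j' :
  (0 < k)%N -> (i < 3)%N -> (j < 3)%N -> (i' < 3)%N -> (j' < 3)%N ->
  Q *+ k = Phi i j - Phi i' j' -> pulled 1 Q.
Proof.
move=> hk hi hj hi' hj' e; apply: (@pulled_of_natmul k) => //; rewrite e.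
by apply: pulledB; apply: pulled_phiE.
Qed.

Lemma pulled_of_phiE_add (Q : P4) k i j i' j' :
  (0 < k)%N -> (i < 3)%N -> (j < 3)%N -> (i' < 3)%N -> (j' < 3)%N ->
  Q *+ k = Phi i j + Phi i' j' -> pulled 1 Q.
Proof.
move=> hk hi hj hi' hj' e; apply: (@pulled_of_natmul k) => //; rewrite e.
by apply: pulledD; apply: pulled_phiE.
Qed.

Lemma pulled_qXqX a b : (a < 4)%N -> (b < 4)%N -> a != b -> pulled 1 (X a * X b).
Proof.
have h01 : pulled 1 (X 0 * X 1) by apply: (@pulled_of_phiE_sub _ 4 2 1 1 2) => //=; ring.
have h02 : pulled 1 (X 0 * X 2) by apply: (@pulled_of_phiE_sub _ 4 0 2 2 0) => //=; ring.
have h03 : pulled 1 (X 0 * X 3) by apply: (@pulled_of_phiE_sub _ 4 1 0 0 1) => //=; ring.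
have h12 : pulled 1 (X 1 * X 2) by apply: (@pulled_of_phiE_add _ 4 0 1 1 0) => //=; ring.
have h13 : pulled 1 (X 1 * X 3) by apply: (@pulled_of_phiE_add _ 4 0 2 2 0) => //=; ring.
have h23 : pulled 1 (X 2 * X 3) by apply: (@pulled_of_phiE_add _ 4 1 2 2 1) => //=; ring.
case: a => [|[|[|[|a]]]] //; case: b => [|[|[|[|b]]]] // _ _ _;
  first [done | by rewrite mulrC].
Qed.

Lemma pulled_sq_diff_qX0 a : (a < 4)%N -> pulled 1 (X 0 * X 0 - X a * X a).
Proof.
case: a => [|[|[|[|a]]]] // _; first by rewrite subrr; apply: pulled0.
- by apply: (@pulled_of_phiE_add _ 2 1 1 2 2) => //=; ring.
- by apply: (@pulled_of_phiE_add _ 2 0 0 2 2) => //=; ring.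
- by apply: (@pulled_of_phiE_add _ 2 0 0 1 1) => //=; ring.
Qed.

Lemma pulled_sq_diff a b : (a < 4)%N -> (b < 4)%N -> pulled 1 (X a * X a - X b * X b).
Proof.
move=> ha hb; rewrite (_ : _ - _ = (X 0 * X 0 - X b * X b) - (X 0 * X 0 - X a * X a)); last by ring.
by apply: pulledB; apply: pulled_sq_diff_qX0.
Qed.


Lemma pulled_sum d (I : Type) (r : seq I) (Pr : pred I) (G : I -> P4) :
  (forall i, Pr i -> pulled d (G i)) -> pulled d (\sum_(i <- r | Pr i) G i).
Proof.
move=> h; apply: big_ind => //; [exact: pulled0 | exact: pulledD].
Qed.

Lemma exists_third_index a b : exists v, [&& (v < 4)%N, v != a & v != b].
Proof.
have [h0|h0] := boolP ((0 != a) && (0 != b)); first by exists 0%N.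
have [h1|h1] := boolP ((1 != a) && (1 != b)); first by exists 1%N.
exists 2%N; move: h0 h1; rewrite !negb_and !negbK.
by case: a => [|[|[|a]]]; case: b => [|[|[|b]]].
Qed.

Lemma pulled_cube_mul a b : (a < 4)%N -> (b < 4)%N -> a != b -> pulled 2 (X a * X a * X a * X b).
Proof.
move=> ha hb hab; have [v /and3P[hv hva hvb]] := exists_third_index a b.
rewrite (_ : X a * X a * X a * X b
  = (X a * X b) * (X a * X a - X v * X v) + (X a * X v) * (X b * X v)); last by ring.
apply: pulledD; apply: (@pulledM 1 1).
- exact: pulled_qXqX.
- exact: pulled_sq_diff.
- by apply: pulled_qXqX; rewrite // eq_sym.
- by apply: pulled_qXqX; rewrite // eq_sym.
Qed.

Lemma pulled_fourth_power a : (a < 4)%N -> pulled 2 (X a * X a * X a * X a).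
Proof.
move=> ha.
have [hav haw hvw] : [/\ a != ((a + 1) %% 4)%N, a != ((a + 2) %% 4)%N &
   ((a + 1) %% 4)%N != ((a + 2) %% 4)%N] by move: ha; case: a => [|[|[|[|a]]]].
have hv : (((a + 1) %% 4) < 4)%N by rewrite ltn_mod.
have hw : (((a + 2) %% 4) < 4)%N by rewrite ltn_mod.
move: hav haw hvw hv hw; set v := ((a + 1) %% 4)%N; set w := ((a + 2) %% 4)%N => hav haw hvw hv hw.
apply: (@pulled_of_natmul 2) => //.
rewrite (_ : X a * X a * X a * X a *+ 2 = (X a * X a - X v * X v) * (X a * X a - X v * X v)
               + (X a * X a - X w * X w) * (X a * X a - X w * X w)
               - (X v * X v - X w * X w) * (X v * X v - X w * X w)
               + ((X a * X v) * (X a * X v)) *+ 2 + ((X a * X w) * (X a * X w)) *+ 2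
               - ((X v * X w) * (X v * X w)) *+ 2); last by ring.
have hm (A B : P4) : pulled 1 A -> pulled 1 B -> pulled 2 (A * B) by apply: (@pulledM 1 1).
have hm2 (A : P4) : pulled 1 A -> pulled 2 ((A * A) *+ 2).
  by move=> hA; rewrite mulr2n; apply: pulledD; apply: hm.
repeat first [apply: pulledB | apply: pulledD].
all: first [apply: hm2 | apply: hm]; first [exact: pulled_sq_diff | exact: pulled_qXqX].
Qed.

Lemma pulled_deg4_neq a b c e : (a < 4)%N -> (b < 4)%N -> (c < 4)%N -> (e < 4)%N -> a != b ->
  pulled 2 (X a * X b * X c * X e).
Proof.
move=> ha hb hc he hab.
have [hce|hce] := eqVneq c e; last first.
  by rewrite -mulrA; apply: (@pulledM 1 1); apply: pulled_qXqX.
subst e.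
have [hca|hca] := eqVneq c a.
  subst c; rewrite (_ : X a * X b * X a * X a = X a * X a * X a * X b); last by ring.
  exact: pulled_cube_mul.
have [hcb|hcb] := eqVneq c b.
  subst c; rewrite (_ : X a * X b * X b * X b = X b * X b * X b * X a); last by ring.
  by apply: pulled_cube_mul; rewrite // eq_sym.
rewrite (_ : X a * X b * X c * X c = (X a * X c) * (X b * X c)); last by ring.
by apply: (@pulledM 1 1); apply: pulled_qXqX; rewrite // eq_sym.
Qed.

Lemma pulled_deg4 a b c e : (a < 4)%N -> (b < 4)%N -> (c < 4)%N -> (e < 4)%N ->
  pulled 2 (X a * X b * X c * X e).
Proof.
move=> ha hb hc he.
have [hab|hab] := eqVneq a b; last exact: pulled_deg4_neq.
have [hce|hce] := eqVneq c e; last first.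
  rewrite (_ : X a * X b * X c * X e = X c * X e * X a * X b); last by ring.
  exact: pulled_deg4_neq.
subst b e; have [hac|hac] := eqVneq a c.
  by subst c; apply: pulled_fourth_power.
rewrite (_ : X a * X a * X c * X c = (X a * X c) * (X a * X c)); last by ring.
by apply: (@pulledM 1 1); apply: pulled_qXqX.
Qed.

Lemma mnm_split n (m : 'X_{1..4}) : mdeg m = n.+1 ->
  exists (i : 'I_4) (m' : 'X_{1..4}), m = (U_(i) + m')%MM /\ mdeg m' = n.
Proof.
move=> dm; have [i mi] : exists i, m i != 0%N.
  case: (pickP (fun i => m i != 0%N)) => [i mi|m0]; first by exists i.
  suff : m = 0%MM by move=> m_eq0; move: dm; rewrite m_eq0 mdeg0.
  by apply/mnmP => i; rewrite mnm0E; apply/eqP/negbFE/m0.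
have le_m : (U_(i) <= m)%MM by rewrite lep1mP.
exists i, (m - U_(i))%MM; split; first by rewrite addmC submK.
by move: dm; rewrite -{1}(submK le_m) mdegD mdeg1 addn1 => -[].
Qed.

Lemma mpolyXU_qX (i : 'I_4) : 'X_[U_(i)] = X i :> P4.
Proof. by rewrite /qX inord_val. Qed.

Lemma exists_other_index (i : 'I_4) : exists v : 'I_4, v != i.
Proof.
exists (if val i == 0%N then inord 1 else inord 0).
by case: i => [[|k] hk]; rewrite -val_eqE /= inordK.
Qed.

Lemma pulled_monomial_step k : (2 <= k)%N ->
  (forall m : 'X_{1..4}, mdeg m = (2 * k)%N -> pulled k ('X_[m] : P4)) ->
  forall m : 'X_{1..4}, mdeg m = (2 * k.+1)%N -> pulled k.+1 ('X_[m] : P4).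
Proof.
move=> hk IH m; rewrite mulnS => /mnm_split [i [m1 [-> /mnm_split [j [m2 [-> dm2]]]]]].
rewrite !mpolyXD !mpolyXU_qX mulrA -add1n.
have [<- | ij] := eqVneq i j; last first.
  by apply: pulledM; [apply: pulled_qXqX => //; rewrite val_eqE | exact: IH].
have k2_gt0 : (0 < 2 * k)%N by rewrite muln_gt0 (leq_trans _ hk).
have [l [m3 [-> dm3]]] := mnm_split (etrans dm2 (esym (prednK k2_gt0))).
have IH3 (v : 'I_4) : pulled k (X v * 'X_[m3]).
  by rewrite -mpolyXU_qX -mpolyXD; apply: IH; rewrite mdegD mdeg1 dm3 add1n prednK.
rewrite mpolyXD mpolyXU_qX.
have [<- | il] := eqVneq i l; last first.
  rewrite (_ : X i * X i * (X l * 'X_[m3]) = (X i * X l) * (X i * 'X_[m3])); last by ring.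
  by apply: pulledM; [apply: pulled_qXqX => //; rewrite val_eqE | exact: IH3].
have [v vi] := exists_other_index i.
rewrite (_ : X i * X i * (X i * 'X_[m3]) = (X i * X i - X v * X v) * (X i * 'X_[m3])
                                          + (X i * X v) * (X v * 'X_[m3])); last by ring.
apply: pulledD; apply: pulledM => //; first exact: pulled_sq_diff.
by apply: pulled_qXqX => //; rewrite val_eqE eq_sym.
Qed.

Lemma pulled_monomial4 (m : 'X_{1..4}) : mdeg m = 4 -> pulled 2 ('X_[m] : P4).
Proof.
move=> /mnm_split [a [m1 [-> /mnm_split [b [m2 [-> /mnm_split [c [m3 [-> dm3]]]]]]]]].
have [e [m0 [-> /eqP]]] := mnm_split dm3; rewrite mdeg_eq0 => /eqP ->.
by rewrite addm0 !mpolyXD !mpolyXU_qX !mulrA; apply: pulled_deg4.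
Qed.

Lemma pulled_monomial k : k != 1%N ->
  forall m : 'X_{1..4}, mdeg m = (2 * k)%N -> pulled k ('X_[m] : P4).
Proof.
elim: k => [|k IH] hk m hm.
  have -> : m = 0%MM by apply/eqP; rewrite -mdeg_eq0 hm.
  by rewrite mpolyX0; exists 1; rewrite dhomog1 /pullPhi rmorph1.
case: k IH hk hm => [//|[|k]] IH _ hm; first exact: pulled_monomial4.
by apply: pulled_monomial_step => //; apply: IH.
Qed.

Lemma pulled_homog k (P : P4) : k != 1%N -> P \is (2 * k).-homog -> pulled k P.
Proof.
move=> hk hP; rewrite (mpolyE P) big_seq; apply: pulled_sum => m hm.
apply: pulledZ; apply: pulled_monomial => //.
exact: (dhomog_mf hP hm).
Qed.

End Image.

Lemma freeP_cast (K : fieldType) (vT : vectType K) m (X : m.-tuple vT) n (a : 'I_n -> K) :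
  free X -> m = n -> \sum_(i < n) a i *: X`_i = 0 -> forall i, a i = 0.
Proof. by move=> fX e; subst n; move/freeP: fX; apply. Qed.

Lemma sum_mxvec (V : nmodType) (G : 'I_(3 * 3) -> V) :
  \sum_k G k = \sum_(i < 3) \sum_(j < 3) G (mxvec_index i j).
Proof.
rewrite (reindex (uncurry (@mxvec_index 3 3))) /=; last first.
  by apply: onW_bij; apply: onT_bij; exact: curry_mxvec_bij.
by rewrite pair_big /=; apply: eq_bigr => -[i j].
Qed.

Lemma phiE_lin_indep (F : numFieldType) (b : 'I_3 -> 'I_3 -> F) :
  (forall w x y z, \sum_(i < 3) \sum_(j < 3) b i j * phiE w x y z i j = 0) ->
  forall i j, b i j = 0.
Proof.
pose S w x y z := \sum_(i < 3) \sum_(j < 3) b i j * phiE w x y z i j.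
move=> S0; have {}S0 w x y z : S w x y z = 0 := S0 w x y z.
pose c (i j : nat) := b (inord i) (inord j).
have SE w x y z : S w x y z =
    c 0 0 * phiE w x y z 0 0 + c 0 1 * phiE w x y z 0 1 + c 0 2 * phiE w x y z 0 2
  + c 1 0 * phiE w x y z 1 0 + c 1 1 * phiE w x y z 1 1 + c 1 2 * phiE w x y z 1 2
  + c 2 0 * phiE w x y z 2 0 + c 2 1 * phiE w x y z 2 1 + c 2 2 * phiE w x y z 2 2.
  by rewrite /S !sum3 !inordK // !addrA.
have solve k (a e : F) : a *+ k.+1 = e -> e = 0 -> a = 0.
  by move=> <- /eqP; rewrite mulrn_eq0 => /eqP.
have c00 : c 0 0 = 0.
  by apply: (solve 1 _ (S 1 0 0 0 + S 0 1 0 0)); [rewrite !SE /=; ring | rewrite !S0 addr0].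
have c11 : c 1 1 = 0.
  by apply: (solve 1 _ (S 1 0 0 0 + S 0 0 1 0)); [rewrite !SE /=; ring | rewrite !S0 addr0].
have c22 : c 2 2 = 0.
  by apply: (solve 1 _ (S 1 0 0 0 + S 0 0 0 1)); [rewrite !SE /=; ring | rewrite !S0 addr0].
have c21 : c 2 1 = 0.
  by apply: (solve 3 _ (S 1 1 0 0 + S 0 0 1 1)); [rewrite !SE /=; ring | rewrite !S0 addr0].
have c02 : c 0 2 = 0.
  by apply: (solve 3 _ (S 1 0 1 0 + S 0 1 0 1)); [rewrite !SE /=; ring | rewrite !S0 addr0].
have c10 : c 1 0 = 0.
  by apply: (solve 3 _ (S 1 0 0 1 + S 0 1 1 0)); [rewrite !SE /=; ring | rewrite !S0 addr0].
have c12 : c 1 2 = 0.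
  apply: (solve 3 _ (S 0 0 1 1 - S 1 1 0 0 + 2%:R * (S 1 0 0 0 + S 0 1 0 0))).
    by rewrite !SE /=; ring.
  by rewrite !S0; ring.
have c20 : c 2 0 = 0.
  apply: (solve 3 _ (S 0 1 0 1 - S 1 0 1 0 + 2%:R * (S 1 0 0 0 + S 0 0 1 0))).
    by rewrite !SE /=; ring.
  by rewrite !S0; ring.
have c01 : c 0 1 = 0.
  apply: (solve 3 _ (S 0 1 1 0 - S 1 0 0 1 + 2%:R * (S 1 0 0 0 + S 0 0 0 1))).
    by rewrite !SE /=; ring.
  by rewrite !S0; ring.
move=> i j; rewrite -(inord_val i) -(inord_val j).
by case: i => [[|[|[|i]]] ?] //; case: j => [[|[|[|j]]] ?].
Qed.

Section Final.
Variable R : realType.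
Local Notation C := (CC R).
Local Notation P9 := (poly9 R).

Lemma vanishes_on_cone (p : P9) : vanishes_on (@coneO3 R) p <->
  (forall c (M : 'M[C]_3), M^T *m M = 1%:M -> mxeval p (c *: M) = 0).
Proof.
split.
  move=> h c M hM; apply: h => q hq; apply: hq; by exists c, M.
by move=> h N hN; apply: hN => M' [c [M [hM ->]]]; exact: h.
Qed.

Lemma vanishes_on_cone_pullPhi d (p : P9) :
  p \is d.-homog -> vanishes_on (@coneO3 R) p <-> pullPhi p = 0.
Proof.
move=> hp; split.
  by move/vanishes_on_cone; apply: pullPhi_eq0_of_vanish.
by move=> hT; apply/vanishes_on_cone; apply: vanish_of_pullPhi_eq0 hp hT.
Qed.

Lemma pullPhi_comb n (a : 'I_n -> C) (ps : 'I_n -> P9) :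
  pullPhi (\sum_i a i *: ps i) = \sum_i a i *: pullPhi (ps i).
Proof. by rewrite /pullPhi raddf_sum; apply: eq_bigr => i _; exact: comp_mpolyZ. Qed.

Lemma dhomog_comb d n (a : 'I_n -> C) (ps : 'I_n -> P9) :
  (forall i, ps i \is d.-homog) -> \sum_i a i *: ps i \is d.-homog.
Proof. by move=> h; apply: rpred_sum => i _; apply: rpredZ. Qed.

Lemma mpoly_of_dhomog_comb d (I : Type) (r : seq I) (a : I -> C) (X : I -> dhomog 4 C d) :
  mpoly_of_dhomog (\sum_(i <- r) a i *: X i) = \sum_(i <- r) a i *: mpoly_of_dhomog (X i).
Proof. by rewrite raddf_sum; apply: eq_bigr => i _; exact: linearZ. Qed.

Lemma not_indep_mod_cone d n (U : {vspace dhomog 4 C (2 * d)}) : (\dim U <= n)%N ->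
  (forall p : P9, p \is d.-homog -> exists w, (w \in U) && (mpoly_of_dhomog w == pullPhi p)) ->
  forall ps : 'I_n.+1 -> P9, ~ indep_mod_cone d ps.
Proof.
move=> hU hsp ps [homog_ps hind].
pose w i := xchoose (hsp _ (homog_ps i)).
have hw i : (w i \in U) && (mpoly_of_dhomog (w i) == pullPhi (ps i)).
  exact: xchooseP (hsp _ (homog_ps i)).
pose X := [tuple w i | i < n.+1].
have hX (i : 'I_n.+1) : X`_i = w i by rewrite -tnth_nth tnth_mktuple.
have fX : free X.
  apply/freeP => k hk i; apply: (hind k) i.
  apply/(vanishes_on_cone_pullPhi (dhomog_comb k homog_ps)); rewrite pullPhi_comb.
  have e := congr1 (@mpoly_of_dhomog _ _ _) hk; rewrite mpoly_of_dhomog_comb raddf0 in e.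
  transitivity (\sum_i k i *: mpoly_of_dhomog X`_i); last exact: e.
  by apply: eq_bigr => j _; rewrite hX; case/andP: (hw j) => _ /eqP ->.
have : (\dim <<X>> <= \dim U)%N.
  apply: dimvS; apply/span_subvP => x /mapP [j _ ->].
  by case/andP: (hw j).
by rewrite (eqnP fX) size_tuple leqNgt ltnS hU.
Qed.

Lemma pullPhi_in_fullv d (p : P9) : p \is d.-homog ->
  exists w : dhomog 4 C (2 * d),
    (w \in (fullv : {vspace dhomog 4 C (2 * d)})) && (mpoly_of_dhomog w == pullPhi p).
Proof.
move=> hp; exists (@indhomog 4 C (2 * d) (pullPhi p)); rewrite memvf /=.
by rewrite /indhomog insubdK ?eqxx //; exact: pullPhi_homog.
Qed.

Lemma dim_dhomog4 d : \dim (fullv : {vspace dhomog 4 C (2 * d)}) = 'C(2 * d + 3, 3).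
Proof.
rewrite dimvf; transitivity 'C(2 * d + 3, 2 * d); first by [].
by rewrite -[X in 'C(_, X)](addnK 3 (2 * d)) bin_sub // leq_addl.
Qed.

Lemma indep_mod_cone_basis d : d != 1%N ->
  exists ps : 'I_('C(2 * d + 3, 3)) -> P9, indep_mod_cone d ps.
Proof.
move=> hd.
pose B := vbasis (fullv : {vspace dhomog 4 C (2 * d)}).
have ex (w : dhomog 4 C (2 * d)) :
    exists p : P9, (p \is d.-homog) && (pullPhi p == mpoly_of_dhomog w).
  have [p [hp hT]] := pulled_homog hd (dhomog_is_dhomog w).
  by exists p; rewrite hp hT eqxx.
pose ps (i : 'I_('C(2 * d + 3, 3))) := xchoose (ex B`_i).
have hps i : ps i \is d.-homog by case/andP: (xchooseP (ex B`_i)).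
exists ps; split => // a /(vanishes_on_cone_pullPhi (dhomog_comb a hps)) h.
rewrite pullPhi_comb in h.
apply: (freeP_cast (basis_free (vbasisP fullv)) (dim_dhomog4 d)).
have e : mpoly_of_dhomog (\sum_i a i *: B`_i) = mpoly_of_dhomog (0 : dhomog 4 C (2 * d)).
  rewrite mpoly_of_dhomog_comb raddf0; transitivity (\sum_i a i *: pullPhi (ps i)); last exact: h.
  apply: eq_bigr => i _; congr (_ *: _).
  by case/andP: (xchooseP (ex B`_i)) => _ /eqP ->.
exact: val_inj e.
Qed.

Lemma indep_mod_cone_linear : exists ps : 'I_(3 * 3) -> P9, indep_mod_cone 1 ps.
Proof.
have hX (k : 'I_(3 * 3)) : ('X_k : P9) \is 1.-homog.
  by rewrite dhomogX; apply/eqP; exact: mdeg1.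
exists (fun k : 'I_(3 * 3) => 'X_k); split => // a /(vanishes_on_cone_pullPhi (dhomog_comb a hX)) h.
rewrite pullPhi_comb in h.
have H w x y z : \sum_(i < 3) \sum_(j < 3) a (mxvec_index i j) * phiE w x y z i j = 0.
  pose v (i : 'I_4) := nth 0 [:: w; x; y; z] i.
  transitivity ((\sum_k a k *: pullPhi 'X_k).@[v]); last by rewrite h meval0.
  rewrite raddf_sum /= sum_mxvec; apply: eq_bigr => i _; apply: eq_bigr => j _.
  by rewrite mevalZ meval_pullPhi /mxeval mevalXU mxvecE /Phimx_at mxE /v !inordK.
have hb := phiE_lin_indep H.
by move=> k; case/mxvec_indexP: k => i j; exact: hb.
Qed.

Definition PhiX_forms : (3 * 3).-tuple (dhomog 4 C (2 * 1)) :=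
  [tuple @indhomog 4 C (2 * 1) (tnth (PhiX_entries C) k) | k < 3 * 3].

Lemma pullPhi_linear_in_span (p : P9) : p \is 1.-homog ->
  exists w, (w \in <<PhiX_forms>>%VS) && (mpoly_of_dhomog w == pullPhi p).
Proof.
move=> hp; exists (@indhomog 4 C (2 * 1) (pullPhi p)).
have eT (q : P9) :
    q \is 1.-homog -> mpoly_of_dhomog (@indhomog 4 C (2 * 1) (pullPhi q)) = pullPhi q.
  by move=> hq; rewrite /indhomog insubdK //; exact: pullPhi_homog.
rewrite eT // eqxx andbT.
have hXm m : m \in msupp p -> ('X_[m] : P9) \is 1.-homog.
  by move=> hm; rewrite dhomogX (dhomog_mf hp hm).
have ev : mpoly_of_dhomog (@indhomog 4 C (2 * 1) (pullPhi p)) =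
    mpoly_of_dhomog (\sum_(m <- msupp p) p@_m *: @indhomog 4 C (2 * 1) (pullPhi 'X_[m])).
  rewrite mpoly_of_dhomog_comb; transitivity (pullPhi p); first exact: (eT p hp).
  rewrite {1}(mpolyE p).
  rewrite /pullPhi raddf_sum /= big_seq [RHS]big_seq; apply: eq_bigr => m hm.
  rewrite comp_mpolyZ; congr (_ *: _); symmetry; exact: (eT _ (hXm m hm)).
rewrite (val_inj ev) big_seq.
apply: memv_suml => m hm; apply: memvZ.
have [k /eqP ->] : exists k, m == (U_(k))%MM by apply/mdeg1P; rewrite (dhomog_mf hp hm).
apply: memv_span.
have -> : @indhomog 4 C (2 * 1) (pullPhi 'X_k) = tnth PhiX_forms k.
  by rewrite tnth_mktuple /pullPhi comp_mpolyXU -tnth_nth.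
exact: mem_tnth.
Qed.

End Final.

Definition hilb (d : nat) : nat := ('C(d.*2 + 3, 3) - (d == 1%N))%N.

Lemma binom3_mul6 n :
  'C(n.*2 + 3, 3)%:Z * 6 = (2 * n%:Z + 3) * (2 * n%:Z + 2) * (2 * n%:Z + 1).
Proof.
have -> : 6 = (3`!)%:Z by [].
rewrite -PoszM bin_ffact !ffactnS ffactn0 muln1 -!subn1 -mul2n !(PoszM, PoszD).
by rewrite !subn1 /= -!(PoszD, PoszM); congr Posz; lia.
Qed.

Lemma hilb_numerator_small d : (d <= 5)%N ->
  \sum_(k < 5 | (k <= d)%N) (-1) ^+ k * 'C(4, k)%:Z * (hilb (d - k))%:Z
  = nth 0 [:: 1; 5; 5; -6; 4; -1] d.
Proof.
by case: d => [|[|[|[|[|[|d]]]]]] // _; rewrite big_mkcond !big_ord_recl big_ord0; vm_compute.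
Qed.

Lemma hilb_numerator_large n :
  \sum_(k < 5 | (k <= n.+4.+2)%N) (-1) ^+ k * 'C(4, k)%:Z * (hilb (n.+4.+2 - k))%:Z = 0.
Proof.
rewrite big_mkcond !big_ord_recl big_ord0 /= /hilb /bump /= !subSS !subn0 /=.
apply: (@mulIf _ 6) => //; rewrite mul0r !mulrDl.
have mul6 (x y z : int) : x * y * z * 6 = x * y * (z * 6) by ring.
by rewrite !mul6 !binom3_mul6 !intS; ring.
Qed.

Lemma dim_coord_ring_hilb (R : realType) d : dim_coord_ring_deg R d (hilb d).
Proof.
have [->|hd] := eqVneq d 1%N.
  change (dim_coord_ring_deg R 1 (3 * 3)); split; first exact: indep_mod_cone_linear.
  move=> ps; apply: (@not_indep_mod_cone R 1 (3 * 3) <<PhiX_forms R>>%VS).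
    by rewrite (leq_trans (dim_span _)) // size_tuple.
  exact: pullPhi_linear_in_span.
rewrite /hilb (negbTE hd) subn0 -mul2n; split; first exact: indep_mod_cone_basis.
move=> ps; apply: (@not_indep_mod_cone R d _ fullv); first by rewrite dim_dhomog4.
exact: pullPhi_in_fullv.
Qed.

Theorem theorem3p2 (R : realType) :
  exists h : nat -> nat,
    (forall d, dim_coord_ring_deg R d (h d)) /\
    (forall d, h d = ('C(d.*2 + 3, 3) - (d == 1%N))%N) /\
    (forall d : nat,
       (\sum_(k < 5 | (k <= d)%N)
          (-1) ^+ k * ('C(4, k))%:Z * (h (d - k)%N)%:Z)%R
       = nth 0%R [:: 1; 5; 5; (-6); 4; (-1)]%R d).
Proof.
exists hilb; split; first exact: dim_coord_ring_hilb.
split => // d.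
have [hd|hd] := leqP d 5; first exact: hilb_numerator_small.
have [e ->] : exists e, d = e.+4.+2 by exists (d - 6)%N; lia.
by rewrite hilb_numerator_large nth_default.
Qed.
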